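(* Let $P,Q\in\mathbb P_d$ and $x\in\mathbb R$. Let $U_x:=\operatorname{Pol}(P^{x/2}Q^{1/2})$ and $V_x:=\operatorname{Pol}(P^{1/2}Q^{x/2})$. Then $$\operatorname{F}_{P^x}(P,Q)=\operatorname{Tr}\big[P^{1/2}U_xQ^{1/2}\big]=\operatorname{Tr}\big[P^{\frac{1-x}{2}}\sqrt{P^{x/2}QP^{x/2}}\big],\qquad \operatorname{F}_{Q^x}(P,Q)=\operatorname{Tr}\big[P^{1/2}V_xQ^{1/2}\big]=\operatorname{Tr}\big[\sqrt{Q^{x/2}PQ^{x/2}}\,Q^{\frac{1-x}{2}}\big].$$
   Context: $\mathbb P_d$ is the set of $d\times d$ complex positive definite matrices. For an invertible matrix $A$, $\operatorname{Pol}(A):=A(A^*A)^{-1/2}$ is its unitary polar factor. The generalized fidelity is $\operatorname{F}_R(P,Q):=\operatorname{Tr}\big[\sqrt{R^{1/2}PR^{1/2}}\,R^{-1}\sqrt{R^{1/2}QR^{1/2}}\big]$ for $R\in\mathbb P_d$. *)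

From HB Require Import structures.
From mathcomp Require Import all_boot all_order all_algebra.
From mathcomp Require Import complex.
From mathcomp Require Import boolp reals exp.
Set Implicit Arguments. Unset Strict Implicit. Unset Printing Implicit Defensive.
Import Order.TTheory GRing.Theory Num.Theory.
Local Open Scope ring_scope.
Local Open Scope complex_scope.

Section MatrixFunctions.
Variables (R : realType) (d : nat).
Local Notation C := (complex R).

Definition adjmx (A : 'M[C]_d) : 'M[C]_d := (map_mx conjc A)^T.

Definition unitarymx (U : 'M[C]_d) : Prop := U *m adjmx U = 1%:M.

Definition posdef (P : 'M[C]_d) : Prop :=
  adjmx P = P /\
  forall v : 'cV[C]_d, v != 0 -> 0 < ((map_mx conjc v)^T *m P *m v) 0 0.

Definition pos_spectral (P U : 'M[C]_d) (l : 'rV[R]_d) : Prop :=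
  unitarymx U /\ (forall i, 0 < l 0 i) /\
  P = U *m diag_mx (map_mx (fun t => t%:C) l) *m adjmx U.

(* real power P^x of a positive definite matrix, via its spectral
   decomposition P = U diag(l) U^*, P^x = U diag(l^x) U^*
   (default value 0 when no such decomposition exists). *)
Definition mpow (x : R) (P : 'M[C]_d) : 'M[C]_d :=
  match pselect (exists UL : 'M[C]_d * 'rV[R]_d, pos_spectral P UL.1 UL.2) with
  | left H => let UL := projT1 (cid H) in
      UL.1 *m diag_mx (map_mx (fun t => (powR t x)%:C) UL.2) *m adjmx UL.1
  | right _ => 0
  end.

Definition msqrt (P : 'M[C]_d) : 'M[C]_d := mpow (2^-1) P.

Definition Pol (A : 'M[C]_d) : 'M[C]_d := A *m mpow (- 2^-1) (adjmx A *m A).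

Definition genF (Rm P Q : 'M[C]_d) : C :=
  \tr (msqrt (msqrt Rm *m P *m msqrt Rm) *m invmx Rm
       *m msqrt (msqrt Rm *m Q *m msqrt Rm)).

End MatrixFunctions.

From Pilot Require Import Defs.
From HB Require Import structures.
From mathcomp Require Import all_boot all_order all_algebra.
From mathcomp Require Import complex.
From mathcomp Require Import boolp reals exp.
From mathcomp Require Import ring.
Import Order.TTheory GRing.Theory Num.Theory.
Local Open Scope ring_scope.
Local Open Scope complex_scope.

(* All powers of [P] are functions of [P]: they are Hermitian, invertible and
   satisfy [P^s P^t = P^(s+t)], so with [R = P^x] the generalized fidelity
   collapses to [Tr[P^((1-x)/2) (P^(x/2) Q P^(x/2))^(1/2)]].  For an invertible
   [A] the polar factor is also [(A A^* )^(-1/2) A]; with [A = P^(x/2) Q^(1/2)]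
   this gives [P^(1/2) U_x Q^(1/2) = P^(1/2) (A A^* )^(1/2) P^(-x/2)], and
   cyclicity of the trace yields the same value.  The statements for [Q^x]
   and [V_x] are symmetric, using [Pol B = B (B^* B)^(-1/2)] directly. *)

Set Implicit Arguments.
Unset Strict Implicit.
Unset Printing Implicit Defensive.

Section Adjoint.
Variables (R : realType) (d : nat).
Implicit Types A B U V : 'M[complex R]_d.

Lemma adjmxM A B : adjmx (A *m B) = adjmx B *m adjmx A.
Proof. by rewrite /adjmx map_mxM trmx_mul. Qed.

Lemma adjmxK : involutive (@adjmx R d).
Proof. by move=> A; apply/matrixP => i j; rewrite !mxE conjcK. Qed.

Lemma adjmx_sesqui A : (A ^t* )%sesqui = adjmx A.
Proof. by apply/matrixP => i j; rewrite !mxE. Qed.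

Lemma unitmx_adjmx A : (adjmx A \in unitmx) = (A \in unitmx).
Proof. by rewrite /adjmx unitmx_tr map_unitmx. Qed.

Lemma unitarymx_adjmx_mul U : Defs.unitarymx U -> adjmx U *m U = 1%:M.
Proof. exact: mulmx1C. Qed.

Lemma unitarymxM U V :
  Defs.unitarymx U -> Defs.unitarymx V -> Defs.unitarymx (U *m V).
Proof.
by rewrite /Defs.unitarymx adjmxM => uU uV; rewrite mulmxA -(mulmxA U) uV mulmx1.
Qed.

End Adjoint.

Section DiagMap.
Variables (R : realType) (d : nat).
Implicit Types (f g : R -> R) (l m : 'rV[R]_d) (P U V W : 'M[complex R]_d).

Definition diag_map f l : 'M[complex R]_d := diag_mx (map_mx (fun t => (f t)%:C) l).

Lemma adjmx_diag_map f l : adjmx (diag_map f l) = diag_map f l.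
Proof.
apply/matrixP => i j; rewrite /adjmx /diag_map !mxE.
by case: (eqVneq i j) => [->|_]; rewrite ?mulr1n ?mulr0n ?conjc_real ?conjc0.
Qed.

Lemma diag_mapM f g l :
  diag_map f l *m diag_map g l = diag_map (fun t => f t * g t) l.
Proof.
apply/matrixP => i j; rewrite /diag_map mul_diag_mx !mxE.
by case: (eqVneq i j) => [->|_]; rewrite ?mulr1n ?mulr0n ?mulr0 ?rmorphM.
Qed.

Lemma eq_diag_map f g l :
  (forall i, f (l 0 i) = g (l 0 i)) -> diag_map f l = diag_map g l.
Proof. by move=> fg; apply/matrixP => i j; rewrite /diag_map !mxE fg. Qed.

Lemma diag_map1 l : diag_map (fun=> 1) l = 1%:M.
Proof. by apply/matrixP => i j; rewrite /diag_map !mxE. Qed.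

Lemma diag_map_comp f g l : diag_map f (map_mx g l) = diag_map (f \o g) l.
Proof. by apply/matrixP => i j; rewrite /diag_map !mxE. Qed.

(* Entrywise, the hypothesis reads [W i j * (l j - m i) = 0]: every nonzero
   entry of [W] links equal eigenvalues, on which [f] agrees. *)
Lemma diag_map_intertwine f l m W :
  W *m diag_map id l = diag_map id m *m W -> W *m diag_map f l = diag_map f m *m W.
Proof.
move=> /matrixP WD; apply/matrixP => i j; move: (WD i j).
rewrite /diag_map !mul_mx_diag !mul_diag_mx !mxE.
have [-> _|Wij] := eqVneq (W i j) 0; first by rewrite mul0r mulr0.
move=> /eqP; rewrite mulrC -subr_eq0 -mulrBl mulf_eq0 (negbTE Wij) orbF.
by rewrite subr_eq0 => /eqP/complexI ->; rewrite mulrC.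
Qed.

Lemma pos_spectral_unique f P U V l m :
  pos_spectral P U l -> pos_spectral P V m ->
  U *m diag_map f l *m adjmx U = V *m diag_map f m *m adjmx V.
Proof.
move=> [uU [_ PU]] [uV [_ PV]].
have uU' := unitarymx_adjmx_mul uU; have uV' := unitarymx_adjmx_mul uV.
have WD : adjmx V *m U *m diag_map id l = diag_map id m *m (adjmx V *m U).
  have : adjmx V *m P *m U = adjmx V *m P *m U by [].
  rewrite {1}PU PV !mulmxA uV' mul1mx -!mulmxA uU' mulmx1.
  by rewrite !mulmxA.
transitivity (V *m (adjmx V *m U *m diag_map f l) *m adjmx U).
  by rewrite !mulmxA uV mul1mx.
by rewrite (diag_map_intertwine f WD) !mulmxA -(mulmxA _ U) uU mulmx1.
Qed.

(* [mpow] picks some decomposition by choice; [pos_spectral_unique] makes the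
   choice irrelevant. *)
Lemma mpowE x P U l : pos_spectral P U l ->
  mpow x P = U *m diag_map (fun t => powR t x) l *m adjmx U.
Proof.
move=> PUl; rewrite /mpow; case: pselect => [ex|[]]; last by exists (U, l).
by case: (cid ex) => [[V m] PVm] /=; apply: pos_spectral_unique PVm PUl.
Qed.

Lemma pos_spectral_mpow x P U l : pos_spectral P U l ->
  pos_spectral (mpow x P) U (map_mx (fun t => powR t x) l).
Proof.
move=> PUl; have [uU [l_gt0 _]] := PUl; split => //; split.
  by move=> i; rewrite mxE powR_gt0.
by rewrite (mpowE _ PUl) -[diag_mx _]/(diag_map id _) diag_map_comp.
Qed.

End DiagMap.

Section MatrixPower.
Variables (R : realType) (d : nat).
Implicit Types (P W : 'M[complex R]_d) (a b : R).

Definition pos_diagonalizable P := exists U l, pos_spectral P U l.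

Lemma mpow_conj P W a : pos_diagonalizable P -> Defs.unitarymx W ->
  mpow a (adjmx W *m P *m W) = adjmx W *m mpow a P *m W.
Proof.
move=> [U [l PUl]] uW; have [uU [l_gt0 PU]] := PUl.
have WPUl : pos_spectral (adjmx W *m P *m W) (adjmx W *m U) l.
  split; first apply: unitarymxM => //.
    by rewrite /Defs.unitarymx adjmxK; apply: mulmx1C.
  by split => //; rewrite {1}PU adjmxM adjmxK !mulmxA.
by rewrite (mpowE _ WPUl) (mpowE _ PUl) adjmxM adjmxK !mulmxA.
Qed.

Section Powers.
Variable P : 'M[complex R]_d.
Hypothesis hP : pos_diagonalizable P.

Lemma mpowD a b : mpow a P *m mpow b P = mpow (a + b) P.
Proof.
have [U [l PUl]] := hP; have [uU [l_gt0 _]] := PUl.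
rewrite !(mpowE _ PUl) !mulmxA -(mulmxA _ (adjmx U)) unitarymx_adjmx_mul // mulmx1.
rewrite -(mulmxA U) diag_mapM; congr (_ *m _ *m _); apply: eq_diag_map => i.
by rewrite powRD // (gt_eqF (l_gt0 i)) implybT.
Qed.

Lemma mpow0 : mpow 0 P = 1%:M.
Proof.
have [U [l PUl]] := hP; have [uU _] := PUl.
rewrite (mpowE _ PUl) (@eq_diag_map _ _ _ (fun=> 1)) => [|i]; last exact: powRr0.
by rewrite diag_map1 mulmx1.
Qed.

Lemma mpow1 : mpow 1 P = P.
Proof.
have [U [l PUl]] := hP; have [_ [l_gt0 PU]] := PUl.
rewrite (mpowE _ PUl) [RHS]PU; congr (_ *m _ *m _).
by apply: (@eq_diag_map _ _ _ id) => i; rewrite powRr1 // ltW.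
Qed.

Lemma mpowK a : mpow a P *m mpow (- a) P = 1%:M.
Proof. by rewrite mpowD subrr mpow0. Qed.

Lemma mpow_unit a : mpow a P \in unitmx.
Proof. exact: (mulmx1_unit (mpowK a)).1. Qed.

Lemma invmx_mpow a : invmx (mpow a P) = mpow (- a) P.
Proof. by rewrite -[LHS]mulmx1 -(mpowK a) mulKmx ?mpow_unit. Qed.

Lemma adjmx_mpow a : adjmx (mpow a P) = mpow a P.
Proof.
have [U [l PUl]] := hP.
by rewrite (mpowE _ PUl) !adjmxM adjmxK adjmx_diag_map mulmxA.
Qed.

Lemma adjmx_msqrt : adjmx (msqrt P) = msqrt P.
Proof. exact: adjmx_mpow. Qed.

Lemma mpowM a b : mpow b (mpow a P) = mpow (a * b) P.
Proof.
have [U [l PUl]] := hP.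
rewrite (mpowE _ (pos_spectral_mpow a PUl)) (mpowE _ PUl) diag_map_comp.
by congr (_ *m _ *m _); apply: eq_diag_map => i; rewrite /= powRrM.
Qed.

Lemma msqrt_mpow a : msqrt (mpow a P) = mpow (a / 2) P.
Proof. exact: mpowM. Qed.

Lemma msqrtK : msqrt P *m msqrt P = P.
Proof.
by rewrite /msqrt mpowD -[RHS]mpow1; apply: (congr1 (fun a => mpow a P)); field.
Qed.

Lemma mpowNhalf_mul : mpow (- 2^-1) P *m P = msqrt P.
Proof.
by rewrite -{2}mpow1 mpowD /msqrt; apply: (congr1 (fun a => mpow a P)); field.
Qed.

Lemma mul_mpowNhalf : P *m mpow (- 2^-1) P = msqrt P.
Proof.
by rewrite -{1}mpow1 mpowD /msqrt; apply: (congr1 (fun a => mpow a P)); field.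
Qed.

End Powers.
End MatrixPower.

Section Positivity.
Variables (R : realType) (d : nat).
Implicit Types (A H : 'M[complex R]_d).

Lemma col_dnorm_gt0 (w : 'cV[complex R]_d) :
  w != 0 -> 0 < ((map_mx conjc w)^T *m w) 0 0.
Proof.
move=> w_neq0; rewrite (_ : _ 0 0 = dotmx w^T w^T).
  by apply: dotmx_is_dotmx; rewrite trmx_eq0.
by rewrite dotmxE !mxE; apply: eq_bigr => i _; rewrite !mxE mulrC.
Qed.

Lemma posdef_adjmx_mul A : A \in unitmx -> posdef (adjmx A *m A).
Proof.
move=> Au; split; first by rewrite adjmxM adjmxK.
move=> v v_neq0; rewrite (_ : _ *m _ *m v = (map_mx conjc (A *m v))^T *m (A *m v)).
  apply: col_dnorm_gt0; apply: contra v_neq0 => /eqP Av0.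
  by rewrite -(mulKmx Au v) Av0 mulmx0.
by rewrite /adjmx map_mxM trmx_mul !mulmxA.
Qed.

Lemma posdef_mul_adjmx A : A \in unitmx -> posdef (A *m adjmx A).
Proof.
by move=> Au; rewrite -{1}(adjmxK A); apply: posdef_adjmx_mul; rewrite unitmx_adjmx.
Qed.

(* The eigenvalues of [H] are the values of its quadratic form at the
   orthonormal eigenvectors given by the spectral theorem, hence real and
   positive. *)
Lemma posdef_pos_diagonalizable H : posdef H -> pos_diagonalizable H.
Proof.
case=> hH H_gt0; have /orthomx_spectralP : H \is normalmx.
  by apply/normalmxP; rewrite adjmx_sesqui hH.
set S := spectralmx H; set s := spectral_diag H.
have uS : S \is unitarymx := spectral_unitarymx H.
rewrite invmx_unitary // adjmx_sesqui -{2}(adjmxK S) => HS.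
set U := adjmx S in HS.
have uU : Defs.unitarymx U.
  rewrite /Defs.unitarymx /U adjmxK; apply: mulmx1C.
  by rewrite -adjmx_sesqui; apply/unitarymxP.
have uU' := unitarymx_adjmx_mul uU.
have UHU : adjmx U *m H *m U = diag_mx s.
  by rewrite HS !mulmxA uU' mul1mx -mulmxA uU' mulmx1.
have s_gt0 i : 0 < s 0 i.
  rewrite (_ : s 0 i = (adjmx U *m H *m U) i i); last by rewrite UHU mxE eqxx mulr1n.
  rewrite (_ : _ i i = ((map_mx conjc (col i U))^T *m H *m col i U) 0 0).
    apply: H_gt0; apply/eqP => col0.
    have /matrixP/(_ i 0) := congr1 (mulmx (adjmx U)) col0.
    rewrite colE mulmxA uU' mul1mx mulmx0 !mxE !eqxx /= => /eqP.
    by rewrite oner_eq0.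
  rewrite !mxE; apply: eq_bigr => k _; rewrite !mxE; congr (_ * _).
  by apply: eq_bigr => j _; rewrite !mxE.
exists U, (map_mx (@complex.Re R) s); split; first exact: uU.
split.
  by move=> i; rewrite mxE; have := s_gt0 i; rewrite ltcE => /andP[].
rewrite {1}HS; congr (_ *m diag_mx _ *m _); apply/matrixP => i j; rewrite !mxE ord1.
by have := s_gt0 j; rewrite ltcE => /andP[/eqP Im0 _]; case: (s 0 j) Im0 => ? ? /= ->.
Qed.

End Positivity.

Section Polar.
Variables (R : realType) (d : nat).
Implicit Types (A p q : 'M[complex R]_d).

(* With [M := A A^*] and [T := M^(-1/2) A], [T] is unitary and
   [A^* A = T^* M T], so [(A^* A)^(-1/2) = T^* M^(-1/2) T]. *)
Lemma PolE A : A \in unitmx -> Pol A = mpow (- 2^-1) (A *m adjmx A) *m A.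
Proof.
move=> Au; set M := A *m adjmx A.
have hM : pos_diagonalizable M := posdef_pos_diagonalizable (posdef_mul_adjmx Au).
set T := mpow (- 2^-1) M *m A.
have uT : Defs.unitarymx T.
  rewrite /Defs.unitarymx /T adjmxM (adjmx_mpow hM) mulmxA -(mulmxA _ A) -/M.
  by rewrite (mpowNhalf_mul hM) /msqrt (mpowK hM).
have AT : A = msqrt M *m T by rewrite /T mulmxA (mpowK hM) mul1mx.
clearbody T M; rewrite /Pol AT adjmxM (adjmx_msqrt hM) mulmxA.
rewrite -(mulmxA (adjmx T)) (msqrtK hM) (mpow_conj _ hM uT) -!mulmxA (mulmxA T) uT.
by rewrite mul1mx mulmxA (mpowK hM) mul1mx.
Qed.

Lemma mxtrace_mulmx_Pol p a q : a \in unitmx -> q \in unitmx ->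
  \tr (p *m Pol (a *m q) *m adjmx q) =
  \tr (invmx (adjmx a) *m p *m msqrt (a *m q *m adjmx (a *m q))).
Proof.
move=> au qu; have Au : a *m q \in unitmx by rewrite unitmx_mul au qu.
set M := a *m q *m adjmx (a *m q).
have hM := posdef_pos_diagonalizable (posdef_mul_adjmx Au).
have aqq : a *m q *m adjmx q = M *m invmx (adjmx a).
  by rewrite /M adjmxM !mulmxA mulmxK ?unitmx_adjmx.
rewrite PolE // -/M -mulmxA -(mulmxA _ (a *m q)) aqq mulmxA (mpowNhalf_mul hM).
by rewrite mulmxA mxtrace_mulC mulmxA.
Qed.

Lemma mxtrace_adjmx_Pol p b q : p \in unitmx -> b \in unitmx ->
  \tr (adjmx p *m Pol (p *m b) *m q) =
  \tr (msqrt (adjmx (p *m b) *m (p *m b)) *m (q *m invmx (adjmx b))).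
Proof.
move=> pu bu; have Au : p *m b \in unitmx by rewrite unitmx_mul pu bu.
set K := adjmx (p *m b) *m (p *m b).
have hK := posdef_pos_diagonalizable (posdef_adjmx_mul Au).
have ppb : adjmx p *m (p *m b) = invmx (adjmx b) *m K.
  by rewrite /K adjmxM -!mulmxA mulKmx ?unitmx_adjmx.
rewrite /Pol -/K !mulmxA -(mulmxA (adjmx p)) ppb -(mulmxA (invmx _) K).
by rewrite (mul_mpowNhalf hK) -(mulmxA (invmx _)) mxtrace_mulC -!mulmxA.
Qed.

End Polar.

Section Fidelity.
Variables (R : realType) (d : nat).
Implicit Types (P Q : 'M[complex R]_d) (x : R).

Lemma genF_mpowl P Q x : pos_diagonalizable P ->
  genF (mpow x P) P Q =
  \tr (mpow ((1 - x) / 2) P *m msqrt (mpow (x / 2) P *m Q *m mpow (x / 2) P)).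
Proof.
move=> hP.
have sandwich : mpow (x / 2) P *m P *m mpow (x / 2) P = mpow (x + 1) P.
  rewrite -{2}(mpow1 hP) !(mpowD hP).
  by apply: (congr1 (fun a => mpow a P)); field.
have prefactor : msqrt (mpow (x + 1) P) *m invmx (mpow x P) = mpow ((1 - x) / 2) P.
  rewrite (msqrt_mpow hP) (invmx_mpow hP) (mpowD hP).
  by apply: (congr1 (fun a => mpow a P)); field.
by rewrite /genF msqrt_mpow // sandwich prefactor.
Qed.

Lemma genF_mpowr P Q x : pos_diagonalizable Q ->
  genF (mpow x Q) P Q =
  \tr (msqrt (mpow (x / 2) Q *m P *m mpow (x / 2) Q) *m mpow ((1 - x) / 2) Q).
Proof.
move=> hQ.
have sandwich : mpow (x / 2) Q *m Q *m mpow (x / 2) Q = mpow (x + 1) Q.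
  rewrite -{2}(mpow1 hQ) !(mpowD hQ).
  by apply: (congr1 (fun a => mpow a Q)); field.
have postfactor : invmx (mpow x Q) *m msqrt (mpow (x + 1) Q) = mpow ((1 - x) / 2) Q.
  rewrite (msqrt_mpow hQ) (invmx_mpow hQ) (mpowD hQ).
  by apply: (congr1 (fun a => mpow a Q)); field.
by rewrite /genF msqrt_mpow // sandwich -mulmxA postfactor.
Qed.

Lemma mxtrace_Pol_mpowl P Q x : pos_diagonalizable P -> pos_diagonalizable Q ->
  \tr (msqrt P *m Pol (mpow (x / 2) P *m msqrt Q) *m msqrt Q) =
  \tr (mpow ((1 - x) / 2) P *m msqrt (mpow (x / 2) P *m Q *m mpow (x / 2) P)).
Proof.
move=> hP hQ.
have sandwich : mpow (x / 2) P *m msqrt Q *m adjmx (mpow (x / 2) P *m msqrt Q) =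
                mpow (x / 2) P *m Q *m mpow (x / 2) P.
  rewrite adjmxM (adjmx_msqrt hQ) (adjmx_mpow hP) mulmxA.
  by rewrite -(mulmxA (mpow (x / 2) P)) (msqrtK hQ).
have prefactor : invmx (adjmx (mpow (x / 2) P)) *m msqrt P = mpow ((1 - x) / 2) P.
  rewrite (adjmx_mpow hP) (invmx_mpow hP) (mpowD hP).
  by apply: (congr1 (fun a => mpow a P)); field.
rewrite -{2}(adjmx_msqrt hQ).
have Qu : msqrt Q \in unitmx := mpow_unit hQ _.
apply: etrans (mxtrace_mulmx_Pol _ (mpow_unit hP _) Qu) _.
by rewrite sandwich prefactor.
Qed.

Lemma mxtrace_Pol_mpowr P Q x : pos_diagonalizable P -> pos_diagonalizable Q ->
  \tr (msqrt P *m Pol (msqrt P *m mpow (x / 2) Q) *m msqrt Q) =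
  \tr (msqrt (mpow (x / 2) Q *m P *m mpow (x / 2) Q) *m mpow ((1 - x) / 2) Q).
Proof.
move=> hP hQ.
have sandwich : adjmx (msqrt P *m mpow (x / 2) Q) *m (msqrt P *m mpow (x / 2) Q) =
                mpow (x / 2) Q *m P *m mpow (x / 2) Q.
  rewrite adjmxM (adjmx_msqrt hP) (adjmx_mpow hQ) mulmxA.
  by rewrite -(mulmxA (mpow (x / 2) Q)) (msqrtK hP).
have postfactor : msqrt Q *m invmx (adjmx (mpow (x / 2) Q)) = mpow ((1 - x) / 2) Q.
  rewrite (adjmx_mpow hQ) (invmx_mpow hQ) (mpowD hQ).
  by apply: (congr1 (fun a => mpow a Q)); field.
rewrite -{1}(adjmx_msqrt hP).
have Pu : msqrt P \in unitmx := mpow_unit hP _.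
apply: etrans (mxtrace_adjmx_Pol _ Pu (mpow_unit hQ _)) _.
by rewrite sandwich postfactor.
Qed.

End Fidelity.

Theorem mainTheorem10 (R : realType) (d : nat) (P Q : 'M[complex R]_d) (x : R) :
  posdef P -> posdef Q ->
  let Ux := Pol (mpow (x / 2) P *m msqrt Q) in
  let Vx := Pol (msqrt P *m mpow (x / 2) Q) in
  (genF (mpow x P) P Q = \tr (msqrt P *m Ux *m msqrt Q) /\
   \tr (msqrt P *m Ux *m msqrt Q) =
     \tr (mpow ((1 - x) / 2) P *m msqrt (mpow (x / 2) P *m Q *m mpow (x / 2) P)))
  /\
  (genF (mpow x Q) P Q = \tr (msqrt P *m Vx *m msqrt Q) /\
   \tr (msqrt P *m Vx *m msqrt Q) =
     \tr (msqrt (mpow (x / 2) Q *m P *m mpow (x / 2) Q) *m mpow ((1 - x) / 2) Q)).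
Proof.
move=> /posdef_pos_diagonalizable hP /posdef_pos_diagonalizable hQ Ux Vx.
have trU := mxtrace_Pol_mpowl x hP hQ; have trV := mxtrace_Pol_mpowr x hP hQ.
split; split; [exact: etrans (genF_mpowl _ _ hP) (esym trU) | exact: trU
              | exact: etrans (genF_mpowr _ _ hQ) (esym trV) | exact: trV].
Qed.
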